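(* Let $d'\subseteq\{1,\dots,\mathrm{dim}\}$, let $w$ and $w_1,\dots,w_{\mathrm{dim}}$ be positive integers with $w_i\le w$, and let the dataset be $X=\{(a_1,\dots,a_{\mathrm{dim}}): a_i\in\mathbb{N},\ a_i\le w_i\}$. Let $H$ be the class of line trees of height less than $d$ in which every node tests one of the dimensions in $d'$, different from the dimensions tested by all of its ancestors. Then for a classifier $h$ that assigns the same label to all data points, the disagreement coefficient $\theta_h$ (with respect to $H$ on $X$) is $O\big((3\ln w)^d\big)$.
   Context: A line tree is a decision tree (each internal node compares one coordinate with a threshold, each leaf carries a label in $\{0,1\}$) in which every internal node has at least one child that is a leaf, and all leaves except the deepest one carry the same label while the deepest leaf carries the opposite label. With $n=|X|$: $D(h,h')=\frac1n\sum_{x\in X}\mathbb{I}(h(x)\ne h'(x))$, $B_H(h,r)=\{h'\in H:D(h,h')\le r\}$, $\mathrm{DIS}(V)=\{x\in X:\exists h_1,h_2\in V,h_1(x)\ne h_2(x)\}$, and $\theta_h=\sup_{r>0}\frac{|\mathrm{DIS}(B_H(h,r))|}{rn}$. *)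

From HB Require Import structures.
From mathcomp Require Import all_boot all_order all_algebra.
From mathcomp Require Import all_classical all_reals all_analysis.
Set Implicit Arguments. Unset Strict Implicit. Unset Printing Implicit Defensive.
Import Order.TTheory GRing.Theory Num.Theory.
Local Open Scope ring_scope.

(* Dimensions are indexed 0..dim-1 by 'I_dim (the paper uses 1..dim).      *)
Definition datapoint (dim w : nat) := {ffun 'I_dim -> 'I_w.+1}.

Definition dataset (dim w : nat) (w_ : 'I_dim -> nat) : {set datapoint dim w} :=
  [set a : datapoint dim w | [forall i, (a i <= w_ i)%N]].

(* Binary decision trees: internal nodes compare one coordinate with a
   (real) threshold; x goes to the left child iff x_j <= t. *)
Inductive dtree (R : realType) (dim : nat) :=
| Leaf of bool
| Node of 'I_dim & R & dtree R dim & dtree R dim.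
Arguments Leaf {R dim}.
Arguments Node {R dim}.

Fixpoint eval_tree (R : realType) (dim w : nat) (tr : dtree R dim)
  (x : datapoint dim w) : bool :=
  match tr with
  | Leaf b => b
  | Node j t l r => if ((x j : nat)%:R <= t) then eval_tree l x else eval_tree r x
  end.

Fixpoint height (R : realType) (dim : nat) (tr : dtree R dim) : nat :=
  match tr with
  | Leaf _ => 0
  | Node _ _ l r => (maxn (height l) (height r)).+1
  end.

(* line_tree_lab c tr : every internal node has a leaf child, all leaves
   except the deepest one carry label c, and the deepest leaf carries ~~ c. *)
Fixpoint line_tree_lab (R : realType) (dim : nat) (c : bool) (tr : dtree R dim)
  : Prop :=
  match tr with
  | Leaf b => b = ~~ c
  | Node _ _ l r =>
      (l = Leaf c /\ line_tree_lab c r) \/ (r = Leaf c /\ line_tree_lab c l)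
  end.

Definition line_tree (R : realType) (dim : nat) (tr : dtree R dim) : Prop :=
  exists c, line_tree_lab c tr.

Fixpoint tests_ok (R : realType) (dim : nat) (d' : {set 'I_dim})
  (anc : seq 'I_dim) (tr : dtree R dim) : Prop :=
  match tr with
  | Leaf _ => True
  | Node j _ l r =>
      j \in d' /\ j \notin anc /\ tests_ok d' (j :: anc) l /\ tests_ok d' (j :: anc) r
  end.

Definition Hclass (R : realType) (dim w : nat) (d' : {set 'I_dim}) (d : nat)
  : set (datapoint dim w -> bool) :=
  [set h | exists tr : dtree R dim,
      [/\ line_tree tr, (height tr < d)%N, tests_ok d' [::] tr & h = eval_tree tr]].

Section Disagreement.
Variables (R : realType) (dim w : nat) (X : {set datapoint dim w}).

Definition dist (h h' : datapoint dim w -> bool) : R :=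
  #|[set x in X | h x != h' x]|%:R / #|X|%:R.

Definition ball (H : set (datapoint dim w -> bool)) (h : datapoint dim w -> bool) (r : R)
  : set (datapoint dim w -> bool) :=
  [set h' | H h' /\ dist h h' <= r].

Definition DIS (V : set (datapoint dim w -> bool)) : {set datapoint dim w} :=
  [set x in X | `[< exists h1 h2, [/\ V h1, V h2 & h1 x != h2 x] >]].

Definition theta (H : set (datapoint dim w -> bool)) (h : datapoint dim w -> bool) : \bar R :=
  ereal_sup [set ((#|DIS (ball H h r)|%:R / (r * #|X|%:R))%:E) | r in [set r : R | 0 < r]].

End Disagreement.

From Pilot Require Import Defs.
From HB Require Import structures.
From mathcomp Require Import all_boot all_order all_algebra.
From mathcomp Require Import all_classical all_reals all_analysis.
From mathcomp Require Import zify.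
Import Order.TTheory GRing.Theory Num.Theory.
Set Implicit Arguments.
Unset Strict Implicit.
Unset Printing Implicit Defensive.
Local Open Scope ring_scope.

(* If h is constant (= b) on X and x lies in DIS(B_H(h, r)), some tree h' of the ball
   has h'(x) != b.  The root-to-leaf path of x in h' tests a set J of fewer than d
   distinct coordinates, and every y lying on the same side as x of each of these
   thresholds reaches the same leaf; so the orthant box of x cut out by J and these
   directions lies in the disagreement set of h and h', which has at most r n points.
   It remains to count the points of X whose box (for fixed J and directions) has at
   most T points.  Grouping them by the dyadic sizes floor(log2) of the box sides gives
   at most (log2 w + 2)^|J| classes, and a class is never larger than the box of any
   of its members, so there are at most (log2 w + 2)^|J| T such points.  Summing over
   the 4^dim choices of J and directions, and using log2 w + 2 <= 3 ln w / ln 2, gives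
   the bound.  Only the height and the distinctness of the tested coordinates matter,
   not the line shape of the trees. *)

Lemma card_ord_range n lo hi :
  (hi <= n)%N -> #|[pred z : 'I_n | lo <= z < hi]%N| = (hi - lo)%N.
Proof.
move=> hi_n; rewrite -[(hi - lo)%N]muln1 -sum_nat_const_nat big_geq_mkord.
rewrite (big_ord_widen_cond _ (fun i => lo <= i)%N (fun _ => 1%N) hi_n) -sum1_card.
by apply: eq_bigl => z; rewrite inE.
Qed.

Lemma card_family_prod (A B : finType) (F : A -> pred B) :
  #|[set f : {ffun A -> B} | f \in family F]| = (\prod_a #|F a|)%N.
Proof. by rewrite cardsE card_family foldrE big_map big_enum. Qed.

Lemma leq_card_iota (T : finType) (A : {pred T}) (f : T -> nat) m n :
  {in A &, injective f} -> {in A, forall x, f x \in iota m n} -> (#|A| <= n)%N.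
Proof.
move=> f_inj f_iota; rewrite cardE -(size_map f) -(size_iota m n).
apply: uniq_leq_size => [|_ /mapP[x Ax ->]]; last by apply: f_iota; rewrite -mem_enum.
by rewrite map_inj_in_uniq ?enum_uniq // => x y; rewrite !mem_enum; apply: f_inj.
Qed.

Lemma leq_card_bigcup (T I : finType) (P : pred I) (B : I -> {set T}) :
  (#|\bigcup_(i | P i) B i| <= \sum_(i | P i) #|B i|)%N.
Proof.
elim/big_rec2: _ => [|i n U _ leUn]; first by rewrite cards0.
by rewrite cardsU (leq_trans (leq_subr _ _)) ?leq_add2l.
Qed.

(* [in_halfline true xj] is the side [y_j <= x_j] of a test [x_j <= t] that [x] passes. *)
Definition in_halfline (b : bool) (xj yj : nat) : bool :=
  if b then (yj <= xj)%N else (xj <= yj)%N.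

Lemma halfline_threshold_eq (R : realDomainType) (a c : nat) (t : R) :
  in_halfline (a%:R <= t) a c -> (c%:R <= t) = (a%:R <= t).
Proof.
rewrite /in_halfline; case: ifP => [a_t c_a | /negbT + a_c].
  by apply: le_trans a_t; rewrite ler_nat.
rewrite -ltNge => t_a; apply/negbTE; rewrite -ltNge.
by apply: (lt_le_trans t_a); rewrite ler_nat.
Qed.

(* Disjointness from the ancestors' coordinates is what lets the direction at the
   tested coordinate be chosen freely. *)
Lemma eval_tree_halfline_box (R : realType) dim w (d' : {set 'I_dim})
    (tr : dtree R dim) (anc : seq 'I_dim) (x : datapoint dim w) (b : bool) :
  tests_ok d' anc tr -> eval_tree tr x != b ->
  exists (J : {set 'I_dim}) (s : {ffun 'I_dim -> bool}),
    [/\ [disjoint anc & J], (#|J| <= height tr)%N &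
        forall y : datapoint dim w,
          (forall j, j \in J -> in_halfline (s j) (x j) (y j)) -> eval_tree tr y != b].
Proof.
elim: tr anc => [c | j t l IHl r IHr] anc /=.
  move=> _ xb; exists finset.set0, [ffun=> true]; split; rewrite ?cards0 //.
  by rewrite disjoint_has; apply/hasPn => i; rewrite inE.
move=> [_ [j_anc [ok_l ok_r]]] xb.
have [J [s [J_anc J_height J_box]]] : exists (J : {set 'I_dim}) (s : {ffun 'I_dim -> bool}),
    [/\ [disjoint j :: anc & J], (#|J| <= maxn (height l) (height r))%N &
        forall y : datapoint dim w, (forall i, i \in J -> in_halfline (s i) (x i) (y i)) ->
          (if (x j)%:R <= t then eval_tree l y else eval_tree r y) != b].
  case: ifP xb => _ xb.
    have [J [s [? ? ?]]] := IHl _ ok_l xb.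
    by exists J, s; split; rewrite // (leq_trans _ (leq_maxl _ _)).
  have [J [s [? ? ?]]] := IHr _ ok_r xb.
  by exists J, s; split; rewrite // (leq_trans _ (leq_maxr _ _)).
move: J_anc; rewrite disjoint_cons => /andP[jNJ J_anc].
exists (j |: J), [ffun i => if i == j then (x j)%:R <= t else s i]; split.
- rewrite disjoint_has; apply/hasPn => i i_anc; rewrite !inE.
  by rewrite (disjointFr J_anc i_anc) orbF; apply: contraNneq j_anc => <-.
- by rewrite cardsU1 jNJ.
move=> y y_box.
have y_side : ((y j)%:R <= t) = ((x j)%:R <= t).
  by apply: halfline_threshold_eq; move: (y_box j (setU11 j J)); rewrite ffunE eqxx.
rewrite y_side; apply: J_box => i iJ; move: (y_box i (setU1r j iJ)); rewrite ffunE.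
by case: eqP => [i_j | //]; rewrite i_j (negbTE jNJ) in iJ.
Qed.

Section Boxes.
Variables (dim w : nat) (w_ : 'I_dim -> nat) (J : {set 'I_dim}) (s : {ffun 'I_dim -> bool}).
Hypothesis w_le : forall j, (w_ j <= w)%N.

Definition halfline_size (j : 'I_dim) (z : nat) : nat :=
  if s j then z.+1 else ((w_ j).+1 - z)%N.

Lemma halfline_size_gt0 j (z : nat) : (z <= w_ j)%N -> (0 < halfline_size j z)%N.
Proof. by rewrite /halfline_size; case: (s j) => // z_le; rewrite subn_gt0 ltnS. Qed.

Lemma halfline_size_le j (z : nat) : (z <= w_ j)%N -> (halfline_size j z <= w.+1)%N.
Proof. by have := w_le j; rewrite /halfline_size; case: (s j); lia. Qed.

Definition box (x : datapoint dim w) : {set datapoint dim w} :=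
  [set y | y \in family (fun j =>
     [pred z : 'I_w.+1 | (z <= w_ j)%N && ((j \in J) ==> in_halfline (s j) (x j) z)])].

Lemma card_box x : x \in dataset w w_ ->
  #|box x| = (\prod_j if j \in J then halfline_size j (x j) else (w_ j).+1)%N.
Proof.
rewrite inE => /forallP x_le; rewrite card_family_prod; apply: eq_bigr => j _.
have [x_j w_j] := (x_le j, w_le j); rewrite /halfline_size.
case: (j \in J); [case: (s j) |]; rewrite ?implyTb ?implyFb.
- rewrite -[(x j).+1]subn0 -(@card_ord_range w.+1) ?ltnS ?(leq_trans x_j) //.
  by apply: eq_card => z; rewrite !inE /=; lia.
- rewrite -(@card_ord_range w.+1) ?ltnS //.
  by apply: eq_card => z; rewrite !inE /=; lia.
- rewrite -[(w_ j).+1]subn0 -(@card_ord_range w.+1) ?ltnS //.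
  by apply: eq_card => z; rewrite !inE /=; lia.
Qed.

Definition level (j : 'I_dim) (z : nat) : nat := trunc_log 2 (halfline_size j z).

Lemma level_ltn j (z : nat) : (z <= w_ j)%N -> (level j z < (trunc_log 2 w.+1).+1)%N.
Proof. by move=> z_le; rewrite ltnS leq_trunc_log ?halfline_size_le. Qed.

Definition level_class K (lam : {ffun 'I_dim -> 'I_K}) : {set datapoint dim w} :=
  [set y | y \in family (fun j =>
     [pred z : 'I_w.+1 | (z <= w_ j)%N && ((j \in J) ==> (level j z == lam j))])].

Lemma card_level_class K (lam : {ffun 'I_dim -> 'I_K}) :
  (#|level_class lam| <= \prod_j if j \in J then 2 ^ lam j else (w_ j).+1)%N.
Proof.
rewrite card_family_prod; apply: leq_prod => j _; case: ifP => jJ; last first.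
  rewrite -[(w_ j).+1]subn0 -(@card_ord_range w.+1) ?ltnS //.
  by apply: subset_leq_card; apply/fintype.subsetP => z; rewrite !inE /=; lia.
apply: (@leq_card_iota _ _ (fun z : 'I_w.+1 => halfline_size j z) (2 ^ lam j)).
  move=> z z' /[!inE] /andP[z_le _] /andP[z'_le _]; rewrite /halfline_size.
  by case: (s j) => eq_z; apply: val_inj; move: eq_z z_le z'_le => /=; lia.
move=> z /[!inE] /andP[z_le]; rewrite /level => /eqP lev_z.
have := trunc_log_bounds (isT : (1 < 2)%N) (halfline_size_gt0 z_le).
by rewrite lev_z mem_iota /= expnS mul2n -addnn.
Qed.

Definition thin_points (R : numDomainType) (T : R) : {set datapoint dim w} :=
  [set x in dataset w w_ | #|box x|%:R <= T].

(* A level class is no larger than the box of any of its members. *)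
Lemma card_thin_level_class (R : numDomainType) (T : R) K (lam : {ffun 'I_dim -> 'I_K}) :
  0 <= T -> #|thin_points T :&: level_class lam|%:R <= T.
Proof.
move=> T_ge0; have [-> | [x]] := set_0Vmem (thin_points T :&: level_class lam).
  by rewrite cards0.
move=> /setIP[/setIdP[xX x_thin]]; rewrite inE => /familyP x_lam.
apply: le_trans x_thin.
rewrite ler_nat (leq_trans (subset_leq_card (subsetIr _ _))) //.
apply: leq_trans (card_level_class lam) _; rewrite card_box //.
apply: leq_prod => j _; case: ifP => // jJ.
have /[!inE] /andP[x_le] := x_lam j; rewrite jJ => /eqP <-.
by apply: trunc_logP; rewrite ?halfline_size_gt0.
Qed.

Lemma card_thin_points (R : numDomainType) (T : R) : 0 <= T ->
  #|thin_points T|%:R <= ((trunc_log 2 w.+1).+1 ^ #|J|)%:R * T.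
Proof.
move=> T_ge0; set K := (trunc_log 2 w.+1).+1.
pose Lam := [set lam : {ffun 'I_dim -> 'I_K} |
  lam \in family (fun j => [pred l | (j \in J) || (l == ord0)])].
have card_Lam : #|Lam| = (K ^ #|J|)%N.
  rewrite card_family_prod -prod_nat_const [RHS]big_mkcond /=.
  apply: eq_bigr => j _; case: (j \in J) => /=; first exact: card_ord.
  by rewrite (@eq_card _ _ (pred1 ord0)) ?card1.
have thin_cover :
    thin_points T \subset \bigcup_(lam in Lam) (thin_points T :&: level_class lam).
  apply/fintype.subsetP => x x_thin; have /setIdP[xX _] := x_thin.
  have /[!inE] /forallP x_le := xX.
  apply/bigcupP; exists [ffun j => inord (if j \in J then level j (x j) else 0)].
    rewrite inE; apply/familyP => j; rewrite !inE ffunE.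
    by case: (j \in J) => //=; apply/eqP/val_inj; rewrite /= inordK.
  rewrite inE x_thin inE; apply/familyP => j; rewrite !inE ffunE x_le /=.
  by apply/implyP => ->; rewrite inordK ?level_ltn.
apply: (@le_trans _ _ (\sum_(lam in Lam) #|thin_points T :&: level_class lam|)%N%:R).
  by rewrite ler_nat (leq_trans (subset_leq_card thin_cover)) ?leq_card_bigcup.
rewrite natr_sum (le_trans (ler_sum _ (fun lam _ => card_thin_level_class lam T_ge0))) //.
by rewrite sumr_const card_Lam mulr_natl.
Qed.

End Boxes.

Lemma card_dataset_gt0 dim w (w_ : 'I_dim -> nat) : (0 < #|dataset w w_|)%N.
Proof.
by apply/card_gt0P; exists [ffun=> ord0]; rewrite inE; apply/forallP => i; rewrite ffunE.
Qed.

Lemma DIS_ball_sub_thin_points (R : realType) dim w (w_ : 'I_dim -> nat) (d' : {set 'I_dim})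
    (d : nat) (h : datapoint dim w -> bool) (b : bool) (r : R) x :
  {in dataset w w_, forall y, h y = b} ->
  x \in DIS (dataset w w_) (Defs.ball (dataset w w_) (Hclass R d' d) h r) ->
  exists (J : {set 'I_dim}) (s : {ffun 'I_dim -> bool}),
    (#|J| < d)%N /\ x \in thin_points w w_ J s (r * #|dataset w w_|%:R).
Proof.
move=> h_b /setIdP[xX /asboolP[h1 [h2 [h1_ball h2_ball h12x]]]].
have [_ [[[tr [_ tr_height tr_ok ->]] tr_dist] trx]] :
    exists h', Defs.ball (dataset w w_) (Hclass R d' d) h r h' /\ h' x != b.
  by case: (eqVneq (h1 x) b) => h1x; [exists h2; rewrite -h1x eq_sym | exists h1].
have [J [s [_ J_height J_box]]] := eval_tree_halfline_box tr_ok trx.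
exists J, s; split; first exact: leq_ltn_trans J_height tr_height.
rewrite inE xX /=.
apply: le_trans (_ : #|[set y in dataset w w_ | h y != eval_tree tr y]|%:R <= _).
  rewrite ler_nat; apply/subset_leq_card/fintype.subsetP => y /[!inE] /familyP y_box.
  have y_le : [forall j, (y j <= w_ j)%N].
    by apply/forallP => j; have /[!inE] /andP[] := y_box j.
  rewrite y_le h_b ?inE // eq_sym; apply: J_box => j jJ.
  by have /[!inE] /andP[_] := y_box j; rewrite jJ.
by rewrite -ler_pdivrMr ?ltr0n ?card_dataset_gt0.
Qed.

Lemma card_DIS_ball (R : realType) dim w (w_ : 'I_dim -> nat) (d' : {set 'I_dim})
    (d : nat) (h : datapoint dim w -> bool) (b : bool) (r : R) :
  (forall j, w_ j <= w)%N -> {in dataset w w_, forall y, h y = b} -> 0 <= r ->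
  #|DIS (dataset w w_) (Defs.ball (dataset w w_) (Hclass R d' d) h r)|%:R <=
    (#|{: {set 'I_dim} * {ffun 'I_dim -> bool}}| * (trunc_log 2 w.+1).+1 ^ d)%:R
      * (r * #|dataset w w_|%:R).
Proof.
move=> w_le h_b r_ge0; set T := r * _; set K := (trunc_log 2 w.+1).+1.
have T_ge0 : 0 <= T by rewrite mulr_ge0.
apply: (@le_trans _ _ (\sum_(p : {set 'I_dim} * {ffun 'I_dim -> bool} | (#|p.1| < d)%N)
                        #|thin_points w w_ p.1 p.2 T|)%N%:R).
  rewrite ler_nat (leq_trans _ (leq_card_bigcup _ _)) //; apply/subset_leq_card.
  apply/fintype.subsetP => x /(DIS_ball_sub_thin_points h_b) [J [s [J_lt x_thin]]].
  by apply/bigcupP; exists (J, s).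
apply: (@le_trans _ _ (\sum_(p : {set 'I_dim} * {ffun 'I_dim -> bool}) (K ^ d)%:R * T)); last first.
  by rewrite sumr_const natrM -mulrA [leRHS]mulr_natl.
rewrite natr_sum big_mkcond /=; apply: ler_sum => p _.
case: ifP => [p_lt | _]; last by rewrite mulr_ge0.
apply: le_trans (card_thin_points _ p.2 w_le T_ge0) _.
by rewrite ler_wpM2r // ler_nat leq_pexp2l // ltnW.
Qed.

Lemma trunc_log_le_ln (R : realType) (w : nat) : (2 <= w)%N ->
  ((trunc_log 2 w.+1).+1)%:R <= 3 * ln (w%:R : R) / ln 2.
Proof.
move=> w_ge2; set k := trunc_log 2 w.
have k_gt0 : (0 < k)%N by rewrite trunc_log_gt0.
have levels_le : ((trunc_log 2 w.+1).+1 <= 3 * k)%N.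
  suff : (trunc_log 2 w.+1 <= k.+1)%N by lia.
  by rewrite -[k.+1](@trunc_expnK 2) // leq_trunc_log // trunc_log_ltn.
have ln2_gt0 : 0 < ln (2 : R) by rewrite ln_gt0 // ltr1n.
rewrite ler_pdivlMr //; apply: (@le_trans _ _ ((3 * k)%N%:R * ln 2)).
  by rewrite ler_wpM2r ?(ltW ln2_gt0) // ler_nat.
rewrite natrM -mulrA ler_wpM2l // mulr_natl -lnXn ?ltr0n //.
rewrite ler_ln ?posrE ?exprn_gt0 ?ltr0n ?(leq_trans _ w_ge2) //.
by rewrite -natrX ler_nat trunc_logP // (leq_trans _ w_ge2).
Qed.

Theorem proposition1 (R : realType) (dim : nat) (d' : {set 'I_dim}) (d : nat) :
  exists (C : R) (W0 : nat),
  forall (w : nat) (w_ : 'I_dim -> nat),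
    (W0 <= w)%N -> (0 < w)%N ->
    (forall i, (0 < w_ i)%N && (w_ i <= w)%N) ->
    forall h : datapoint dim w -> bool,
      (exists b : bool, forall x, x \in @dataset dim w w_ -> h x = b) ->
      (@theta R dim w (@dataset dim w w_) (@Hclass R dim w d' d) h
        <= (C * (3 * ln (w%:R : R)) ^+ d)%:E)%E.
Proof.
exists (#|{: {set 'I_dim} * {ffun 'I_dim -> bool}}|%:R / ln 2 ^+ d), 2%N.
move=> w w_ w_ge2 _ w_bounds h [b h_b].
have w_le j : (w_ j <= w)%N by case/andP: (w_bounds j).
apply: ge_ereal_sup => _ [r /= r_gt0 <-]; rewrite lee_fin.
have rn_gt0 : 0 < r * #|dataset w w_|%:R by rewrite mulr_gt0 ?ltr0n ?card_dataset_gt0.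
rewrite ler_pdivrMr //; apply: le_trans (card_DIS_ball d' d w_le h_b (ltW r_gt0)) _.
rewrite ler_wpM2r ?(ltW rn_gt0) // natrM -mulrA ler_wpM2l // natrX mulrC -expr_div_n.
have [-> | d_gt0] := posnP d; first by rewrite !expr0.
have levels_le := trunc_log_le_ln R w_ge2.
by rewrite ler_pXn2r // nnegrE // (le_trans _ levels_le).
Qed.
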